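(* A state-morphism BL-algebra $(\mathbf M,\tau)$ is subdirectly irreducible if and only if one of the following three possibilities holds. (i) $\mathbf M$ is linearly ordered, $\tau$ is the identity on $M$, and $\mathbf M$ is a subdirectly irreducible BL-algebra. (ii) $\tau$ is not faithful, $\mathbf M$ has no nontrivial Boolean elements (i.e. $B(\mathbf M)=\{0,1\}$), $\mathbf M$ is a local BL-algebra, $\mathrm{Ker}(\tau)$ is a subdirectly irreducible hoop, and $\mathrm{Ker}(\tau)$ and $\tau(M)$ have the disjunction property. Moreover, in this case: $\mathbf M$ is linearly ordered if and only if $\mathrm{Rad}_1(\mathbf M)$ is linearly ordered, and then $\mathbf M$ is a subdirectly irreducible BL-algebra such that the smallest nontrivial $\tau$-filter of $(\mathbf M,\tau)$ is the smallest nontrivial filter of $\mathbf M$; and if $\mathrm{Rad}_1(\mathbf M)=\mathrm{Ker}(\tau)$, then $\mathbf M$ is linearly ordered. (iii) $\tau$ is not faithful, $\mathbf M$ has a nontrivial Boolean element, and there are a linearly ordered BL-algebra $\mathbf A$, a subdirectly irreducible BL-algebra $\mathbf B$ and an injective BL-homomorphism $h:\mathbf A\to\mathbf B$ such that $(\mathbf M,\tau)$ is isomorphic, as a state-morphism BL-algebra, to $(\mathbf A\times\mathbf B,\tau_h)$, where $\tau_h(x,y)=(x,h(x))$ for $(x,y)\in A\times B$.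
   Context: A BL-algebra is an algebra $\mathbf M=(M;\wedge,\vee,\odot,\to,0,1)$ of type $\langle 2,2,2,2,0,0\rangle$ such that $(M;\wedge,\vee,0,1)$ is a bounded lattice, $(M;\odot,1)$ is a commutative monoid, and for all $a,b,c$: $c\le a\to b$ iff $a\odot c\le b$; $a\wedge b=a\odot(a\to b)$; $(a\to b)\vee(b\to a)=1$. Put $a^-=a\to 0$. A filter is a nonempty subset closed under $\odot$ and upward closed; a maximal filter is a proper filter not strictly contained in another proper filter; $\mathbf M$ is local if it has a unique maximal filter; $\mathrm{Rad}_1(\mathbf M)$ is the intersection of all maximal filters. An element $a$ is Boolean if $a^{--}=a$ and $a\odot a=a$; $B(\mathbf M)$ is the set of Boolean elements, and a Boolean element is nontrivial if it differs from $0,1$. A state-morphism BL-algebra is a pair $(\mathbf M,\tau)$ where $\tau$ is a BL-algebra endomorphism of $\mathbf M$ with $\tau\circ\tau=\tau$, regarded as an algebra with the additional unary operation $\tau$; its congruences correspond to $\tau$-filters (filters $F$ with $\tau(F)\subseteq F$), so it is subdirectly irreducible iff it has a least $\tau$-filter different from $\{1\}$. $\mathrm{Ker}(\tau)=\{a:\tau(a)=1\}$; $\tau$ is faithful if $\mathrm{Ker}(\tau)=\{1\}$. $\mathrm{Ker}(\tau)$ is a hoop under $\odot,\to,1$, subdirectly irreducible if it has a least filter (nonempty, $\odot$-closed, upward closed within $\mathrm{Ker}(\tau)$) different from $\{1\}$. $\mathrm{Ker}(\tau)$ and $\tau(M)$ have the disjunction property if for all $x\in\mathrm{Ker}(\tau)$,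 $y\in\tau(M)$, $x\vee y=1$ implies $x=1$ or $y=1$. *)

From Stdlib Require Import Classical.

Record BL : Type := MkBL {
  car :> Type;
  bmeet : car -> car -> car;
  bjoin : car -> car -> car;
  bprod : car -> car -> car;
  bimp  : car -> car -> car;
  bzero : car;
  bone  : car;
  meet_comm : forall a b, bmeet a b = bmeet b a;
  meet_assoc : forall a b c, bmeet a (bmeet b c) = bmeet (bmeet a b) c;
  join_comm : forall a b, bjoin a b = bjoin b a;
  join_assoc : forall a b c, bjoin a (bjoin b c) = bjoin (bjoin a b) c;
  meet_absorb : forall a b, bmeet a (bjoin a b) = a;
  join_absorb : forall a b, bjoin a (bmeet a b) = a;
  meet_zero : forall a, bmeet a bzero = bzero;
  join_one : forall a, bjoin a bone = bone;
  prod_comm : forall a b, bprod a b = bprod b a;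
  prod_assoc : forall a b c, bprod a (bprod b c) = bprod (bprod a b) c;
  prod_one : forall a, bprod a bone = a;
  (* residuation: c <= a -> b  iff  a * c <= b, where x <= y := x /\ y = x *)
  residuation : forall a b c,
    bmeet c (bimp a b) = c <-> bmeet (bprod a c) b = bprod a c;
  divisibility : forall a b, bmeet a b = bprod a (bimp a b);
  prelinearity : forall a b, bjoin (bimp a b) (bimp b a) = bone
}.

Arguments bmeet {_}. Arguments bjoin {_}. Arguments bprod {_}. Arguments bimp {_}.
Arguments bzero {_}. Arguments bone {_}.

Section Notions.
Variable M : BL.

Definition ble (x y : M) : Prop := bmeet x y = x.

Definition bneg (a : M) : M := bimp a bzero.

Definition linearly_ordered : Prop := forall x y : M, ble x y \/ ble y x.

Definition is_filter (F : M -> Prop) : Prop :=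
  (exists x, F x) /\
  (forall x y, F x -> F y -> F (bprod x y)) /\
  (forall x y, F x -> ble x y -> F y).

Definition proper_filter (F : M -> Prop) : Prop := is_filter F /\ ~ F bzero.

Definition maximal_filter (F : M -> Prop) : Prop :=
  proper_filter F /\
  forall G, proper_filter G -> (forall x, F x -> G x) -> (forall x, G x -> F x).

Definition is_local : Prop :=
  exists F, maximal_filter F /\
    forall G, maximal_filter G -> forall x, G x <-> F x.

Definition Rad1 (x : M) : Prop := forall F, maximal_filter F -> F x.

Definition Rad1_linearly_ordered : Prop :=
  forall x y, Rad1 x -> Rad1 y -> ble x y \/ ble y x.

(* F differs from {1} (F being a filter, it contains 1) *)
Definition nontrivial_set (F : M -> Prop) : Prop := exists x, F x /\ x <> bone.

Definition least_nontrivial_filter (F : M -> Prop) : Prop :=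
  is_filter F /\ nontrivial_set F /\
  forall G, is_filter G -> nontrivial_set G -> forall x, F x -> G x.

Definition SI_BL : Prop := exists F, least_nontrivial_filter F.

Definition is_boolean (a : M) : Prop := bneg (bneg a) = a /\ bprod a a = a.

Definition no_nontrivial_boolean : Prop :=
  forall a, is_boolean a -> a = bzero \/ a = bone.

Definition has_nontrivial_boolean : Prop :=
  exists a, is_boolean a /\ a <> bzero /\ a <> bone.

End Notions.

Arguments ble {_}. Arguments bneg {_}.

Definition is_BLhom (M N : BL) (f : M -> N) : Prop :=
  (forall a b, f (bmeet a b) = bmeet (f a) (f b)) /\
  (forall a b, f (bjoin a b) = bjoin (f a) (f b)) /\
  (forall a b, f (bprod a b) = bprod (f a) (f b)) /\
  (forall a b, f (bimp a b) = bimp (f a) (f b)) /\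
  f bzero = bzero /\ f bone = bone.

Definition is_state_morphism (M : BL) (tau : M -> M) : Prop :=
  is_BLhom M M tau /\ forall x, tau (tau x) = tau x.

Section StateMorphism.
Variables (M : BL) (tau : M -> M).

Definition is_tau_filter (F : M -> Prop) : Prop :=
  is_filter M F /\ forall x, F x -> F (tau x).

Definition least_nontrivial_tau_filter (F : M -> Prop) : Prop :=
  is_tau_filter F /\ nontrivial_set M F /\
  forall G, is_tau_filter G -> nontrivial_set M G -> forall x, F x -> G x.

Definition SI_SM : Prop := exists F, least_nontrivial_tau_filter F.

Definition Ker (a : M) : Prop := tau a = bone.

Definition faithful : Prop := forall a, Ker a -> a = bone.

Definition is_identity : Prop := forall a, tau a = a.

(* filters of the hoop Ker(tau) (nonempty, product-closed, upward closed in Ker) *)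
Definition is_Ker_filter (G : M -> Prop) : Prop :=
  (forall x, G x -> Ker x) /\
  (exists x, G x) /\
  (forall x y, G x -> G y -> G (bprod x y)) /\
  (forall x y, G x -> Ker y -> ble x y -> G y).

Definition Ker_SI : Prop :=
  exists G, is_Ker_filter G /\ nontrivial_set M G /\
    forall H, is_Ker_filter H -> nontrivial_set M H -> forall x, G x -> H x.

Definition disjunction_property : Prop :=
  forall x y, Ker x -> (exists z, y = tau z) -> bjoin x y = bone ->
    x = bone \/ y = bone.

End StateMorphism.

Lemma pair_eq_iff (X Y : Type) (a c : X) (b d : Y) :
  (a, b) = (c, d) <-> a = c /\ b = d.
Proof. split; [intros H; inversion H; auto | intros [-> ->]; reflexivity]. Qed.

Definition prodBL (A B : BL) : BL.
Proof.
  refine (MkBL (A * B)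
    (fun x y => (bmeet (fst x) (fst y), bmeet (snd x) (snd y)))
    (fun x y => (bjoin (fst x) (fst y), bjoin (snd x) (snd y)))
    (fun x y => (bprod (fst x) (fst y), bprod (snd x) (snd y)))
    (fun x y => (bimp (fst x) (fst y), bimp (snd x) (snd y)))
    (bzero, bzero) (bone, bone) _ _ _ _ _ _ _ _ _ _ _ _ _ _);
  repeat intros [? ?]; simpl;
  try (f_equal; first [apply meet_comm | apply meet_assoc | apply join_comm
        | apply join_assoc | apply meet_absorb | apply join_absorb
        | apply meet_zero | apply join_one | apply prod_comm | apply prod_assoc
        | apply prod_one | apply divisibility | apply prelinearity]).
  rewrite !pair_eq_iff, !residuation; tauto.
Defined.

Definition tau_h (A B : BL) (h : A -> B) (p : prodBL A B) : prodBL A B :=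
  (fst p, h (fst p)).

From Stdlib Require Import Classical ProofIrrelevance.

(* In a subdirectly irreducible state-morphism BL-algebra (M, tau), if a \/ b = 1 where each
   of a, b is tau-fixed or lies in Ker(tau), then a = 1 or b = 1: otherwise the least
   nontrivial tau-filter would lie in the principal tau-filters of a and of b, and these meet
   in {1}.  By prelinearity tau(M) and Ker(tau) are therefore chains, and Ker(tau) and tau(M)
   have the disjunction property.  A faithful tau is the identity, which is case (i).  If tau
   is not faithful and M has no nontrivial Boolean element, the x with no power of tau x equal
   to 0 form the unique maximal filter, and the least tau-filter, contained in Ker(tau), is
   the least filter of the hoop Ker(tau): case (ii).  A nontrivial Boolean element yields a
   complemented e <> 1 in Ker(tau), and x |-> (tau x, x /\ e^-) is an isomorphism of
   (M, tau) onto (tau(M) x [0, e^-], tau_h) for h a = a /\ e^-: case (iii).  Conversely,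
   the least nontrivial tau-filter is exhibited directly in cases (i) and (ii), and in
   case (iii) it is {1} x F, for F the least nontrivial filter of the second factor. *)

(** * Arithmetic of BL-algebras *)

Section Lattice.
Variable M : BL.
Implicit Types x y z : M.

Lemma meet_idem x : bmeet x x = x.
Proof. pose proof (meet_absorb M x (bmeet x x)) as H. now rewrite join_absorb in H. Qed.

Lemma ble_refl x : ble x x.
Proof. apply meet_idem. Qed.

Lemma ble_trans x y z : ble x y -> ble y z -> ble x z.
Proof. unfold ble; intros H1 H2. now rewrite <- H1, <- meet_assoc, H2. Qed.

Lemma ble_antisym x y : ble x y -> ble y x -> x = y.
Proof. unfold ble; intros H1 H2. now rewrite <- H1, meet_comm. Qed.

Lemma meet_le_l x y : ble (bmeet x y) x.
Proof. unfold ble. now rewrite (meet_comm _ x y), <- meet_assoc, meet_idem. Qed.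

Lemma meet_le_r x y : ble (bmeet x y) y.
Proof. unfold ble. now rewrite <- meet_assoc, meet_idem. Qed.

Lemma le_meet x y z : ble z x -> ble z y -> ble z (bmeet x y).
Proof. unfold ble; intros H1 H2. now rewrite meet_assoc, H1, H2. Qed.

Lemma ble_joinE x y : ble x y <-> bjoin x y = y.
Proof.
  unfold ble; split; intro H.
  - rewrite <- H, join_comm, meet_comm. apply join_absorb.
  - rewrite <- H. apply meet_absorb.
Qed.

Lemma join_le_l x y : ble x (bjoin x y).
Proof. apply meet_absorb. Qed.

Lemma join_le_r x y : ble y (bjoin x y).
Proof. rewrite join_comm. apply meet_absorb. Qed.

Lemma join_lub x y z : ble x z -> ble y z -> ble (bjoin x y) z.
Proof. rewrite !ble_joinE; intros H1 H2. now rewrite <- join_assoc, H2, H1. Qed.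

Lemma le0x x : ble bzero x.
Proof. unfold ble. rewrite meet_comm. apply meet_zero. Qed.

Lemma lex1 x : ble x bone.
Proof. apply ble_joinE, join_one. Qed.

Lemma le1_eq x : ble bone x -> x = bone.
Proof. intro H. apply ble_antisym; auto using lex1. Qed.

Lemma le0_eq x : ble x bzero -> x = bzero.
Proof. intro H. apply ble_antisym; auto using le0x. Qed.

Lemma meet_one x : bmeet x bone = x.
Proof. apply lex1. Qed.

Lemma join_zero x : bjoin x bzero = x.
Proof. rewrite join_comm. apply ble_joinE, le0x. Qed.

Lemma join_one_l x : bjoin bone x = bone.
Proof. rewrite join_comm. apply join_one. Qed.

Lemma join_mono x y x' y' : ble x x' -> ble y y' -> ble (bjoin x y) (bjoin x' y').
Proof.
  intros. apply join_lub.
  - eapply ble_trans; [eassumption | apply join_le_l].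
  - eapply ble_trans; [eassumption | apply join_le_r].
Qed.

Lemma meet_mono x y x' y' : ble x x' -> ble y y' -> ble (bmeet x y) (bmeet x' y').
Proof.
  intros. apply le_meet.
  - eapply ble_trans; [apply meet_le_l | eassumption].
  - eapply ble_trans; [apply meet_le_r | eassumption].
Qed.

Lemma join_eq_one_le x y x' y' :
  bjoin x y = bone -> ble x x' -> ble y y' -> bjoin x' y' = bone.
Proof. intros H Hx Hy. apply le1_eq. rewrite <- H. now apply join_mono. Qed.

End Lattice.

Section Residuation.
Variable M : BL.
Implicit Types x y z : M.

Lemma le_imp_iff x y z : ble z (bimp x y) <-> ble (bprod x z) y.
Proof. apply residuation. Qed.

Lemma prod_one_l x : bprod bone x = x.
Proof. rewrite prod_comm. apply prod_one. Qed.

Lemma prod_mono_r x y z : ble x y -> ble (bprod z x) (bprod z y).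
Proof. intro H. apply le_imp_iff. eapply ble_trans; [exact H |]. apply le_imp_iff, ble_refl. Qed.

Lemma prod_mono_l x y z : ble x y -> ble (bprod x z) (bprod y z).
Proof. intro H. rewrite (prod_comm _ x), (prod_comm _ y). now apply prod_mono_r. Qed.

Lemma prod_mono x y x' y' : ble x x' -> ble y y' -> ble (bprod x y) (bprod x' y').
Proof. intros. eapply ble_trans; [apply prod_mono_l | apply prod_mono_r]; eassumption. Qed.

Lemma prod_le_l x y : ble (bprod x y) x.
Proof. rewrite <- (prod_one _ x) at 2. apply prod_mono_r, lex1. Qed.

Lemma prod_le_r x y : ble (bprod x y) y.
Proof. rewrite prod_comm. apply prod_le_l. Qed.

Lemma prod_le_meet x y : ble (bprod x y) (bmeet x y).
Proof. apply le_meet; [apply prod_le_l | apply prod_le_r]. Qed.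

Lemma modus_ponens x y : ble (bprod x (bimp x y)) y.
Proof. apply le_imp_iff, ble_refl. Qed.

Lemma imp_eq_one x y : bimp x y = bone <-> ble x y.
Proof.
  split; intro H.
  - assert (H1 : ble bone (bimp x y)) by (rewrite H; apply ble_refl).
    apply le_imp_iff in H1. now rewrite prod_one in H1.
  - apply le1_eq, le_imp_iff. now rewrite prod_one.
Qed.

Lemma le_imp x y : ble y (bimp x y).
Proof. apply le_imp_iff, prod_le_r. Qed.

Lemma imp_anti_l x x' y : ble x x' -> ble (bimp x' y) (bimp x y).
Proof.
  intro H. apply le_imp_iff. eapply ble_trans; [apply prod_mono_l; exact H | apply modus_ponens].
Qed.

Lemma one_imp y : bimp bone y = y.
Proof.
  apply ble_antisym; [| apply le_imp].
  eapply ble_trans; [| apply modus_ponens]. rewrite prod_one_l. apply ble_refl.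
Qed.

Lemma imp_refl x : bimp x x = bone.
Proof. apply imp_eq_one, ble_refl. Qed.

Lemma zero_prod x : bprod bzero x = bzero.
Proof. apply le0_eq, prod_le_l. Qed.

Lemma zero_imp x : bimp bzero x = bone.
Proof. apply imp_eq_one, le0x. Qed.

Lemma imp_prod x y z : bimp (bprod x y) z = bimp x (bimp y z).
Proof.
  apply ble_antisym; apply le_imp_iff.
  - apply le_imp_iff. rewrite prod_assoc, (prod_comm _ y x). apply modus_ponens.
  - rewrite (prod_comm _ x y), <- prod_assoc.
    eapply ble_trans; [apply prod_mono_r, modus_ponens | apply modus_ponens].
Qed.

Lemma prod_join x y z : bprod x (bjoin y z) = bjoin (bprod x y) (bprod x z).
Proof.
  apply ble_antisym.
  - apply le_imp_iff. apply join_lub; apply le_imp_iff; [apply join_le_l | apply join_le_r].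
  - apply join_lub; apply prod_mono_r; [apply join_le_l | apply join_le_r].
Qed.

Lemma join_prod x y z : bprod (bjoin y z) x = bjoin (bprod y x) (bprod z x).
Proof. now rewrite prod_comm, prod_join, (prod_comm _ x y), (prod_comm _ x z). Qed.

Lemma prod_join_le x y z :
  ble (bprod (bjoin x y) (bjoin x z)) (bjoin x (bprod y z)).
Proof.
  rewrite join_prod, !prod_join. repeat apply join_lub.
  - eapply ble_trans; [apply prod_le_l | apply join_le_l].
  - eapply ble_trans; [apply prod_le_l | apply join_le_l].
  - eapply ble_trans; [apply prod_le_r | apply join_le_l].
  - apply join_le_r.
Qed.

Lemma join_eq_one_prod x y z :
  bjoin x y = bone -> bjoin x z = bone -> bjoin x (bprod y z) = bone.
Proof.
  intros H1 H2. apply le1_eq. pose proof (prod_join_le x y z) as H.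
  now rewrite H1, H2, prod_one in H.
Qed.

(* Multiply by [1 = (x -> y) \/ (y -> x)] and use divisibility on each summand. *)
Lemma imp_meet x y z : bimp (bmeet x y) z = bjoin (bimp x z) (bimp y z).
Proof.
  apply ble_antisym.
  - rewrite <- (prod_one _ (bimp (bmeet x y) z)), <- (prelinearity M x y), prod_join.
    apply join_mono; apply le_imp_iff; rewrite prod_assoc.
    + rewrite (prod_comm _ x), <- prod_assoc, <- divisibility.
      apply le_imp_iff, le_imp_iff. rewrite prod_comm. apply modus_ponens.
    + rewrite (prod_comm _ y), <- prod_assoc, <- divisibility, meet_comm.
      apply le_imp_iff, le_imp_iff. rewrite prod_comm. apply modus_ponens.
  - apply join_lub; apply imp_anti_l; [apply meet_le_l | apply meet_le_r].
Qed.

Lemma prod_neg x : bprod x (bneg x) = bzero.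
Proof. apply le0_eq, modus_ponens. Qed.

End Residuation.
Section Powers.
Variable M : BL.
Implicit Types x y : M.

Fixpoint bpow x (n : nat) : M := match n with 0 => bone | S n => bprod x (bpow x n) end.

Lemma bpowD x n m : bpow x (n + m) = bprod (bpow x n) (bpow x m).
Proof. induction n; simpl. - now rewrite prod_one_l. - now rewrite IHn, prod_assoc. Qed.

Lemma bpow_mono x y n : ble x y -> ble (bpow x n) (bpow y n).
Proof. intro H; induction n; simpl; [apply ble_refl | now apply prod_mono]. Qed.

Lemma bpow1n n : bpow bone n = bone.
Proof. induction n; simpl; [reflexivity | now rewrite IHn, prod_one]. Qed.

Lemma bpowMn x y n : bpow (bprod x y) n = bprod (bpow x n) (bpow y n).
Proof.
  induction n; simpl; [now rewrite prod_one |].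
  rewrite IHn, !prod_assoc. f_equal. rewrite <- !prod_assoc. f_equal. apply prod_comm.
Qed.

Lemma join_eq_one_bpow x y n m :
  bjoin x y = bone -> bjoin (bpow x n) (bpow y m) = bone.
Proof.
  assert (Hl : forall a b k, bjoin a b = bone -> bjoin (bpow a k) b = bone).
  { intros a b k H. induction k; simpl; [apply join_one_l |].
    rewrite join_comm. apply join_eq_one_prod; now rewrite join_comm. }
  intro H. apply Hl. rewrite join_comm. apply Hl. now rewrite join_comm.
Qed.

End Powers.

Arguments bpow {M}.

Section Complemented.
Variable M : BL.
Implicit Types x y z d : M.

Definition complemented d : Prop := bjoin d (bneg d) = bone.

Lemma meet_complemented z d : complemented d -> bmeet z d = bprod z d.
Proof.
  intro H. apply ble_antisym; [| apply prod_le_meet].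
  rewrite <- (prod_one _ (bmeet z d)), <- H, prod_join. apply join_lub.
  - apply prod_mono_l, meet_le_l.
  - eapply ble_trans; [apply prod_mono_l, meet_le_r |]. rewrite prod_neg. apply le0x.
Qed.

Lemma complemented_boolean d : complemented d -> is_boolean M d.
Proof.
  intro H. split.
  - apply ble_antisym.
    + rewrite <- (prod_one _ (bneg (bneg d))), <- H, prod_join. apply join_lub.
      * apply prod_le_r.
      * rewrite prod_comm, prod_neg. apply le0x.
    + apply le_imp_iff. rewrite prod_comm. apply modus_ponens.
  - rewrite <- meet_complemented by exact H. apply meet_idem.
Qed.

Lemma boolean_complemented d : is_boolean M d -> complemented d.
Proof.
  intros [Hnn Hidem].
  assert (E : bimp d (bneg d) = bneg d) by (unfold bneg; now rewrite <- imp_prod, Hidem).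
  transitivity (bimp (bmeet (bneg d) d) bzero).
  - rewrite imp_meet. change (bjoin d (bneg d) = bjoin (bneg (bneg d)) (bneg d)).
    now rewrite Hnn.
  - rewrite meet_comm, divisibility, E, prod_neg. apply zero_imp.
Qed.

Lemma complemented_neg d : complemented d -> complemented (bneg d).
Proof.
  intro H. destruct (complemented_boolean d H) as [Hnn _].
  unfold complemented. now rewrite Hnn, join_comm.
Qed.

Lemma complemented_idem d : complemented d -> bprod d d = d.
Proof. intro H. apply (complemented_boolean d H). Qed.

Lemma meet_join_complemented x y d : complemented d ->
  bmeet (bjoin x y) d = bjoin (bmeet x d) (bmeet y d).
Proof. intro H. rewrite !(meet_complemented _ d H). apply join_prod. Qed.

Lemma meet_imp_complemented x y d : complemented d ->
  bmeet (bimp (bmeet x d) (bmeet y d)) d = bmeet (bimp x y) d.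
Proof.
  intro H. apply ble_antisym; apply le_meet; try apply meet_le_r; apply le_imp_iff.
  - rewrite (meet_complemented _ d H), (prod_comm _ _ d), prod_assoc,
      <- (meet_complemented x d H).
    eapply ble_trans; [apply modus_ponens | apply meet_le_l].
  - apply le_meet.
    + eapply ble_trans; [apply prod_mono; apply meet_le_l | apply modus_ponens].
    + eapply ble_trans; [apply prod_le_l | apply meet_le_r].
Qed.

Lemma no_nontrivial_boolean_of_not :
  ~ has_nontrivial_boolean M -> no_nontrivial_boolean M.
Proof.
  intros Hnb a Ha. apply NNPP. intros [a0 a1]%not_or_and. apply Hnb. now exists a.
Qed.

End Complemented.

Arguments complemented {M}.

Section Filters.
Variable M : BL.
Implicit Types x y : M.

Lemma filter_one (F : M -> Prop) : is_filter M F -> F bone.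
Proof. intros [[x Hx] [_ Hup]]. apply (Hup x); auto. apply lex1. Qed.

Lemma filter_bpow (F : M -> Prop) x n : is_filter M F -> F x -> F (bpow x n).
Proof.
  intros HF Hx. induction n; simpl; [now apply filter_one |].
  destruct HF as [_ [Hprod _]]. now apply Hprod.
Qed.

Definition principal_filter x : M -> Prop := fun z => exists n, ble (bpow x n) z.

Lemma principal_filter_filter x : is_filter M (principal_filter x).
Proof.
  split; [| split].
  - exists x, 1. simpl. rewrite prod_one. apply ble_refl.
  - intros y z [n Hn] [m Hm]. exists (n + m). rewrite bpowD. now apply prod_mono.
  - intros y z [n Hn] Hyz. exists n. eapply ble_trans; eauto.
Qed.

Lemma principal_filter_self x : principal_filter x x.
Proof. exists 1. simpl. rewrite prod_one. apply ble_refl. Qed.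

End Filters.

(** * State morphisms *)

Section StateMorphism.
Context {M : BL} {tau : M -> M}.
Hypothesis Htau : is_state_morphism M tau.
Implicit Types x y z a b : M.

Lemma tau_meet x y : tau (bmeet x y) = bmeet (tau x) (tau y).
Proof. apply Htau. Qed.
Lemma tau_join x y : tau (bjoin x y) = bjoin (tau x) (tau y).
Proof. apply Htau. Qed.
Lemma tau_prod x y : tau (bprod x y) = bprod (tau x) (tau y).
Proof. apply Htau. Qed.
Lemma tau_imp x y : tau (bimp x y) = bimp (tau x) (tau y).
Proof. apply Htau. Qed.
Lemma tau_zero : tau bzero = bzero.
Proof. apply Htau. Qed.
Lemma tau_one : tau bone = bone.
Proof. apply Htau. Qed.
Lemma tau_idem x : tau (tau x) = tau x.
Proof. apply Htau. Qed.

Lemma tau_neg x : tau (bneg x) = bneg (tau x).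
Proof. unfold bneg. now rewrite tau_imp, tau_zero. Qed.

Lemma tau_mono x y : ble x y -> ble (tau x) (tau y).
Proof. unfold ble. intro H. now rewrite <- tau_meet, H. Qed.

Lemma tau_bpow x n : tau (bpow x n) = bpow (tau x) n.
Proof. induction n; simpl; [apply tau_one | now rewrite tau_prod, IHn]. Qed.

Lemma Ker_le x y : Ker M tau x -> ble x y -> Ker M tau y.
Proof.
  unfold Ker; intros Hx Hxy. apply tau_mono in Hxy. rewrite Hx in Hxy. now apply le1_eq.
Qed.

Lemma Ker_prod x y : Ker M tau x -> Ker M tau y -> Ker M tau (bprod x y).
Proof. unfold Ker; intros Hx Hy. now rewrite tau_prod, Hx, Hy, prod_one. Qed.

Lemma Ker_tau_filter : is_tau_filter M tau (Ker M tau).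
Proof.
  split; [split; [| split] |].
  - exists bone. apply tau_one.
  - apply Ker_prod.
  - apply Ker_le.
  - unfold Ker; intros x Hx. now rewrite tau_idem.
Qed.

Lemma Ker_imp_of_tau_eq x y : tau x = tau y -> Ker M tau (bimp x y).
Proof. unfold Ker; intro E. now rewrite tau_imp, E, imp_refl. Qed.

Lemma faithful_identity : faithful M tau -> is_identity M tau.
Proof.
  intros Hf x. apply ble_antisym; apply imp_eq_one, Hf, Ker_imp_of_tau_eq;
    now rewrite tau_idem.
Qed.

Lemma principal_tau_filter a :
  Ker M tau a \/ tau a = a -> is_tau_filter M tau (principal_filter M a).
Proof.
  intro Ha. split; [apply principal_filter_filter |].
  intros x [n Hn]. apply tau_mono in Hn. rewrite tau_bpow in Hn. destruct Ha as [Ha | Ha].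
  - exists 0. rewrite Ha, bpow1n in Hn. apply le1_eq in Hn. rewrite Hn. apply ble_refl.
  - exists n. now rewrite Ha in Hn.
Qed.

Lemma tau_filter_Ker_part (G : M -> Prop) :
  is_filter M G -> is_tau_filter M tau (fun z => G z /\ Ker M tau z).
Proof.
  intro HG. pose proof (filter_one M G HG) as G1. destruct HG as [_ [Hprod Hup]].
  split; [split; [| split] |].
  - exists bone. split; [exact G1 | apply tau_one].
  - intros x y [Gx Kx] [Gy Ky]. split; [now apply Hprod | now apply Ker_prod].
  - intros x y [Gx Kx] Hxy. split; [eauto | now apply (Ker_le x)].
  - intros x [_ Kx]. rewrite Kx. split; [exact G1 | apply tau_one].
Qed.

Lemma not_faithful_nontrivial : ~ faithful M tau -> bzero <> (bone : M).
Proof.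
  intros Hnf E. apply Hnf. intros a _. apply le1_eq. rewrite <- E. apply le0x.
Qed.

Lemma least_tau_filter_Ker F : ~ faithful M tau ->
  least_nontrivial_tau_filter M tau F -> forall x, F x -> Ker M tau x.
Proof.
  intros Hnf [_ [_ Hleast]]. apply Hleast; [apply Ker_tau_filter |].
  apply NNPP; intro H. apply Hnf. intros a Ha. apply NNPP; intro Ha1. apply H. now exists a.
Qed.

Definition Ker_orthogonal z : Prop := forall k, Ker M tau k -> bjoin z k = bone.

Lemma Ker_orthogonal_le z z' : Ker_orthogonal z -> ble z z' -> Ker_orthogonal z'.
Proof. intros H Hz k Hk. apply (join_eq_one_le M z k); auto using ble_refl. Qed.

Lemma Ker_orthogonal_bpow z n : Ker_orthogonal z -> Ker_orthogonal (bpow z n).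
Proof.
  intros H k Hk. pose proof (join_eq_one_bpow M z k n 1 (H k Hk)) as E.
  simpl in E. now rewrite prod_one in E.
Qed.

Definition tau_nonnil x : Prop := forall n, bpow (tau x) n <> bzero.

Lemma tau_nonnil_le x y : tau_nonnil x -> ble x y -> tau_nonnil y.
Proof.
  intros Hx Hxy n E. apply (Hx n), le0_eq. rewrite <- E.
  now apply bpow_mono, tau_mono.
Qed.

Lemma Ker_tau_nonnil x : ~ faithful M tau -> Ker M tau x -> tau_nonnil x.
Proof.
  intros Hnf Hx n. rewrite Hx, bpow1n. intro E.
  now apply (not_faithful_nontrivial Hnf).
Qed.

End StateMorphism.

Arguments Ker_orthogonal {M} tau z.
Arguments tau_nonnil {M} tau x.

(** * Subdirectly irreducible state-morphism BL-algebras *)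

Section SubdirectlyIrreducible.
Context {M : BL} {tau : M -> M}.
Hypothesis Htau : is_state_morphism M tau.
Hypothesis HSI : SI_SM M tau.
Implicit Types x y z a b : M.

(* The least nontrivial tau-filter lies in both principal tau-filters, so it contains
   some [a^n \/ b^m]; but [a \/ b = 1] forces [a^n \/ b^m = 1]. *)
Lemma SI_join_eq_one a b :
  bjoin a b = bone -> Ker M tau a \/ tau a = a -> Ker M tau b \/ tau b = b ->
  a = bone \/ b = bone.
Proof.
  intros Hab Ha Hb. destruct HSI as [F [_ [[g [Hg g1]] Hleast]]].
  apply NNPP; intros [a1 b1]%not_or_and.
  destruct (Hleast _ (principal_tau_filter Htau a Ha)
              (ex_intro _ a (conj (principal_filter_self M a) a1)) g Hg) as [n Hn].
  destruct (Hleast _ (principal_tau_filter Htau b Hb)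
              (ex_intro _ b (conj (principal_filter_self M b) b1)) g Hg) as [m Hm].
  apply g1, le1_eq. rewrite <- (join_eq_one_bpow M a b n m Hab). now apply join_lub.
Qed.

Lemma chain_of_imp_one x y : bimp x y = bone \/ bimp y x = bone -> ble x y \/ ble y x.
Proof. intros [H | H]; [left | right]; now apply imp_eq_one. Qed.

Lemma SI_tau_chain x y : ble (tau x) (tau y) \/ ble (tau y) (tau x).
Proof.
  apply chain_of_imp_one, SI_join_eq_one; [apply prelinearity | |];
    right; now rewrite (tau_imp Htau), !(tau_idem Htau).
Qed.

Lemma SI_Ker_chain x y : Ker M tau x -> Ker M tau y -> ble x y \/ ble y x.
Proof.
  intros Hx Hy. assert (E : tau x = tau y) by now rewrite Hx, Hy.
  apply chain_of_imp_one, SI_join_eq_one; [apply prelinearity | |];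
    left; apply (Ker_imp_of_tau_eq Htau); auto.
Qed.

Lemma SI_disjunction_property : disjunction_property M tau.
Proof.
  intros x y Hx [z ->] Hj. apply SI_join_eq_one; auto.
  right. apply (tau_idem Htau).
Qed.

Lemma SI_tau_join_eq_one x y :
  bjoin (tau x) (tau y) = bone -> tau x = bone \/ tau y = bone.
Proof.
  intro H. destruct (SI_tau_chain x y) as [L | L]; apply ble_joinE in L.
  - right. now rewrite <- L.
  - left. rewrite join_comm in L. now rewrite <- L.
Qed.

Section NotFaithful.
Hypothesis Hnf : ~ faithful M tau.

Lemma SI_Ker_SI : Ker_SI M tau.
Proof.
  destruct HSI as [F HF]. pose proof (least_tau_filter_Ker Htau F Hnf HF) as FK.
  destruct HF as [[[Fne [Fprod Fup]] _] [Fnt Hleast]].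
  exists F. split; [| split; [exact Fnt |]].
  - repeat split; auto. intros x y Hx _ Hxy. eauto.
  - intros H [HK [Hne [Hprod Hup]]] Hnt. apply Hleast; auto.
    assert (H1 : H bone).
    { destruct Hne as [w Hw].
      apply (Hup w); [exact Hw | apply (tau_one Htau) | apply lex1]. }
    split; [split; [| split] |]; auto.
    + intros x y Hx Hxy. apply (Hup x); auto. apply (Ker_le Htau x); auto.
    + intros x Hx. now rewrite (HK x Hx).
Qed.

(* Two elements of Ker below [x -> y] and [y -> x] would contradict the chain property
   of Ker, applied to [(x -> y) \/ m] and [(y -> x) \/ m] for [m] the smaller one. *)
Lemma Ker_orthogonal_imp x y :
  Ker_orthogonal tau (bimp x y) \/ Ker_orthogonal tau (bimp y x).
Proof.
  apply NNPP; intros [H1 H2]%not_or_and.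
  apply not_all_ex_not in H1 as [k1 [Hk1 H1]%imply_to_and].
  apply not_all_ex_not in H2 as [k2 [Hk2 H2]%imply_to_and].
  assert (exists m, Ker M tau m /\ ble m k1 /\ ble m k2) as [m [Hm [Hm1 Hm2]]].
  { destruct (SI_Ker_chain k1 k2 Hk1 Hk2); [exists k1 | exists k2];
      repeat split; auto using ble_refl. }
  assert (U1 : bjoin (bimp x y) m <> bone).
  { intro E. apply H1. apply (join_eq_one_le M _ _ _ _ E); auto using ble_refl. }
  assert (U2 : bjoin (bimp y x) m <> bone).
  { intro E. apply H2. apply (join_eq_one_le M _ _ _ _ E); auto using ble_refl. }
  assert (J : bjoin (bjoin (bimp x y) m) (bjoin (bimp y x) m) = bone).
  { apply (join_eq_one_le M _ _ _ _ (prelinearity M x y)); apply join_le_l. }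
  destruct (SI_join_eq_one _ _ J) as [E | E]; try contradiction;
    left; apply (Ker_le Htau m); auto; apply join_le_r.
Qed.

(* [tau x] and [tau y] are comparable, and [(tau (x * y))^n] lies above the [2n]-th power
   of the smaller one. *)
Lemma tau_nonnil_prod x y :
  tau_nonnil tau x -> tau_nonnil tau y -> tau_nonnil tau (bprod x y).
Proof.
  intros Hx Hy n E. rewrite (tau_prod Htau), bpowMn in E.
  destruct (SI_tau_chain x y) as [L | L].
  - apply (Hx (n + n)), le0_eq. rewrite bpowD, <- E. now apply prod_mono_r, bpow_mono.
  - apply (Hy (n + n)), le0_eq. rewrite bpowD, <- E. now apply prod_mono_l, bpow_mono.
Qed.

Lemma tau_nonnil_filter : is_filter M (tau_nonnil tau).
Proof.
  split; [| split].
  - exists bone. apply (Ker_tau_nonnil _ Hnf), (tau_one Htau).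
  - apply tau_nonnil_prod.
  - apply (tau_nonnil_le Htau).
Qed.

(* If [(tau g)^n = 0] then [c = g^n] has [tau c = 0], so [c^-] lies in Ker: a filter
   containing Ker and [g] contains [c * c^- = 0]. *)
Lemma tau_nonnil_maximal : maximal_filter M (tau_nonnil tau).
Proof.
  split.
  - split; [exact tau_nonnil_filter |].
    intro H. apply (H 1). simpl. rewrite (tau_zero Htau). apply zero_prod.
  - intros G [HG G0] Hsub g Hg n E.
    set (c := bpow g n).
    assert (Gc : G c) by now apply filter_bpow.
    assert (Gnc : G (bneg c)).
    { apply Hsub, (Ker_tau_nonnil _ Hnf). unfold Ker, c.
      rewrite (tau_neg Htau), (tau_bpow Htau), E. apply zero_imp. }
    apply G0. rewrite <- (prod_neg M c). destruct HG as [_ [Hprod _]]. now apply Hprod.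
Qed.


Section NoBoolean.
Hypothesis Hnb : no_nontrivial_boolean M.

Lemma complemented_trivial (p : M) : complemented p -> p = bzero \/ p = bone.
Proof. intro H. now apply Hnb, complemented_boolean. Qed.

(* With [c^-] in Ker, one of [c -> c^-] and [c^- -> c] is Ker-orthogonal.  In the first
   case [c -> c^- = 1], i.e. [c^2 = 0]; in the second [(c^-)^2] is complemented, hence 0
   or 1. *)
Lemma tau_zero_nilpotent c : tau c = bzero -> exists m, bpow c m = bzero.
Proof.
  intro Hc. apply NNPP; intro Hinf.
  assert (Hi : forall m, bpow c m <> bzero) by (intros m E; apply Hinf; now exists m).
  assert (Kn : Ker M tau (bneg c))
    by (unfold Ker; rewrite (tau_neg Htau), Hc; apply zero_imp).
  destruct (Ker_orthogonal_imp c (bneg c)) as [P | P].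
  - specialize (P _ Kn).
    rewrite join_comm, (proj1 (ble_joinE M _ _) (le_imp M c (bneg c))) in P.
    apply imp_eq_one, le_imp_iff in P. apply (Hi 2). simpl. rewrite prod_one. now apply le0_eq.
  - set (b := bprod (bneg c) (bneg c)).
    assert (Kb : Ker M tau b) by now apply (Ker_prod Htau).
    assert (Pb : Ker_orthogonal tau (bneg b)).
    { apply (Ker_orthogonal_le _ _ P). unfold b, bneg at 3. apply le_imp_iff.
      rewrite <- prod_assoc. eapply ble_trans; [apply prod_mono_r, modus_ponens |].
      rewrite prod_comm. apply modus_ponens. }
    specialize (Pb b Kb). rewrite join_comm in Pb.
    destruct (complemented_trivial b Pb) as [E | E].
    + apply (not_faithful_nontrivial Hnf).
      rewrite E in Kb. unfold Ker in Kb. now rewrite <- Kb, (tau_zero Htau).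
    + assert (E' : bneg c = bone) by (apply le1_eq; rewrite <- E; apply prod_le_l).
      apply (Hi 1). simpl. rewrite prod_one. now apply le0_eq, imp_eq_one.
Qed.

Lemma maximal_filter_tau_nonnil G : maximal_filter M G -> forall x, G x <-> tau_nonnil tau x.
Proof.
  intros HG. assert (Hsub : forall x, G x -> tau_nonnil tau x).
  { destruct HG as [[HGf G0] _]. intros x Hx n E.
    destruct (tau_zero_nilpotent (bpow x n)) as [m Hm];
      [now rewrite (tau_bpow Htau) |].
    apply G0. rewrite <- Hm. now apply filter_bpow, filter_bpow. }
  intro x. split; [apply Hsub |]. apply HG; [apply tau_nonnil_maximal | exact Hsub].
Qed.

Lemma SI_local : is_local M.
Proof.
  exists (tau_nonnil tau). split; [apply tau_nonnil_maximal |].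
  intros G HG x. now apply maximal_filter_tau_nonnil.
Qed.

Lemma Rad1_tau_nonnil x : Rad1 M x <-> tau_nonnil tau x.
Proof.
  split; [intro H; apply H, tau_nonnil_maximal |].
  intros H G HG. now apply (maximal_filter_tau_nonnil G HG).
Qed.

(* [p = b^n] with [tau p = 0] is complemented, since [p^-] lies in Ker; [p = 0] makes Ker
   trivial and [p = 1] contradicts [tau p = 0]. *)
Lemma Ker_orthogonal_tau_nonnil b : Ker_orthogonal tau b -> tau_nonnil tau b.
Proof.
  intros Pb n E. set (p := bpow b n).
  assert (Pp : Ker_orthogonal tau p) by now apply Ker_orthogonal_bpow.
  assert (Hp0 : tau p = bzero) by (unfold p; now rewrite (tau_bpow Htau)).
  assert (Kn : Ker M tau (bneg p))
    by (unfold Ker; rewrite (tau_neg Htau), Hp0; apply zero_imp).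
  destruct (complemented_trivial p (Pp _ Kn)) as [E0 | E1].
  - apply Hnf. intros k Hk. specialize (Pp k Hk). now rewrite E0, join_comm, join_zero in Pp.
  - apply (not_faithful_nontrivial Hnf). now rewrite <- Hp0, E1, (tau_one Htau).
Qed.

Section ChainCriterion.
Hypothesis Hchain : forall a b, Ker M tau a -> tau_nonnil tau b -> ble a b \/ ble b a.

Lemma Ker_join_eq_one a b : bjoin a b = bone -> Ker M tau a -> a = bone \/ b = bone.
Proof.
  intros Hab Ha. apply NNPP; intros [a1 b1]%not_or_and.
  assert (Pb : Ker_orthogonal tau b).
  { intros k Hk. destruct (SI_Ker_chain a k Ha Hk) as [L | L].
    - rewrite join_comm. apply (join_eq_one_le M a b); auto using ble_refl.
    - assert (Kbk : Ker M tau (bjoin b k))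
        by (apply (Ker_le Htau k); auto using join_le_r).
      destruct (SI_Ker_chain _ _ Kbk Ha) as [L2 | L2].
      + exfalso. apply a1, le1_eq. rewrite <- Hab.
        apply join_lub; [apply ble_refl | eapply ble_trans; [apply join_le_l | exact L2]].
      + apply le1_eq. rewrite <- Hab. apply join_lub; auto using join_le_l. }
  destruct (Hchain a b Ha (Ker_orthogonal_tau_nonnil b Pb)) as [L | L];
    apply ble_joinE in L.
  - apply b1. now rewrite <- L.
  - apply a1. rewrite join_comm in L. now rewrite <- L.
Qed.

(* One of [tau (x -> y)] and [tau (y -> x)] is 1, i.e. one implication lies in Ker. *)
Lemma linearly_ordered_of_chain : linearly_ordered M.
Proof.
  intros x y. apply chain_of_imp_one.
  assert (J := prelinearity M x y).
  assert (TJ : bjoin (tau (bimp x y)) (tau (bimp y x)) = bone)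
    by now rewrite <- (tau_join Htau), J, (tau_one Htau).
  destruct (SI_tau_join_eq_one _ _ TJ) as [T | T].
  - now apply Ker_join_eq_one.
  - rewrite join_comm in J. destruct (Ker_join_eq_one _ _ J T); auto.
Qed.

End ChainCriterion.
End NoBoolean.
End NotFaithful.
End SubdirectlyIrreducible.

(** * Sufficient conditions for subdirect irreducibility *)

Section Converse.
Context {M : BL} {tau : M -> M}.
Hypothesis Htau : is_state_morphism M tau.

Lemma Ker_filter_tau_filter (G : M -> Prop) :
  is_Ker_filter M tau G -> is_tau_filter M tau G.
Proof.
  intros [HK [[w Hw] [Hprod Hup]]].
  assert (G1 : G bone) by (apply (Hup w); auto; [apply (tau_one Htau) | apply lex1]).
  split; [split; [| split] |].
  - now exists w.
  - exact Hprod.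
  - intros x y Hx Hxy. apply (Hup x); auto. apply (Ker_le Htau x); auto.
  - intros x Hx. now rewrite (HK x Hx).
Qed.

Lemma tau_filter_Ker_filter (G : M -> Prop) :
  is_tau_filter M tau G -> is_Ker_filter M tau (fun z => G z /\ Ker M tau z).
Proof.
  intros [HG _]. destruct (tau_filter_Ker_part Htau G HG) as [[Hne [Hprod Hup]] _].
  split; [| split; [| split]]; auto.
  - now intros x [_ Hx].
  - intros x y Hx Ky Hxy. split; [| exact Ky]. now apply (Hup x).
Qed.

(* For a nontrivial tau-filter [G] containing [x <> 1] with [tau x <> 1], the element
   [g \/ tau x] (for [g] nontrivial in the least Ker-filter) lies in [G] and in Ker, and is
   not 1 by the disjunction property. *)
Lemma Ker_SI_disjunction_SI :
  Ker_SI M tau -> disjunction_property M tau -> SI_SM M tau.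
Proof.
  intros [G0 [HG0 [[g [Hg g1]] Hleast]]] Hd.
  pose proof (proj1 HG0 g Hg) as Kg.
  exists G0. split; [now apply Ker_filter_tau_filter | split; [now exists g |]].
  intros G HG [x [Hx x1]]. apply (Hleast _ (tau_filter_Ker_filter G HG)).
  destruct HG as [[_ [_ Hup]] Htf].
  destruct (classic (tau x = bone)) as [T | T]; [now exists x |].
  exists (bjoin g (tau x)). repeat split.
  - apply (Hup (tau x)); auto using join_le_r.
  - apply (Ker_le Htau g); auto using join_le_l.
  - intro E. destruct (Hd g (tau x) Kg (ex_intro _ x eq_refl) E); auto.
Qed.

End Converse.

Lemma prod_ble (A B : BL) (p q : prodBL A B) :
  ble p q <-> ble (fst p) (fst q) /\ ble (snd p) (snd q).
Proof. destruct p, q. unfold ble. cbn. apply pair_eq_iff. Qed.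

Lemma BLhom_ble (M N : BL) (f : M -> N) :
  is_BLhom M N f -> forall x y, ble x y -> ble (f x) (f y).
Proof. unfold ble. intros Hf x y H. now rewrite <- (proj1 Hf), H. Qed.

Lemma BLhom_ble_inj (M N : BL) (f : M -> N) :
  is_BLhom M N f -> (forall x y, f x = f y -> x = y) ->
  forall x y, ble (f x) (f y) -> ble x y.
Proof. unfold ble. intros Hf finj x y H. apply finj. now rewrite (proj1 Hf). Qed.

(* Filters are transported by preimages and, along a bijection, by images. *)
Lemma SI_SM_of_isomorphism (M N : BL) (tauM : M -> M) (tauN : N -> N) (f : M -> N) :
  is_BLhom M N f -> (forall x y, f x = f y -> x = y) -> (forall q, exists x, f x = q) ->
  (forall x, f (tauM x) = tauN (f x)) -> SI_SM N tauN -> SI_SM M tauM.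
Proof.
  intros Hf finj fsurj fc [FN [[[_ [Fprod Fup]] Ftau] [[q [Fq q1]] Hleast]]].
  pose proof Hf as [_ [_ [fprod [_ [_ f1]]]]].
  assert (FN1 : FN bone) by (apply (filter_one N); repeat split; auto; now exists q).
  exists (fun x => FN (f x)). repeat split.
  - exists bone. now rewrite f1.
  - intros x y Hx Hy. rewrite fprod. auto.
  - intros x y Hx Hxy. apply (Fup (f x)); auto. now apply (BLhom_ble M N f).
  - intros x Hx. rewrite fc. auto.
  - destruct (fsurj q) as [x <-]. exists x. split; auto. intros ->. auto.
  - intros G [[[w Gw] [Gprod Gup]] Gtau] [x [Gx x1]] y Fy.
    set (fG := fun p => exists z, G z /\ f z = p).
    assert (HfG : is_tau_filter N tauN fG).
    { repeat split.
      - exists (f w), w. auto.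
      - intros _ _ [a [Ga <-]] [b [Gb <-]]. exists (bprod a b). auto.
      - intros _ p [a [Ga <-]] Hap. destruct (fsurj p) as [b <-]. exists b.
        split; auto. apply (Gup a); auto. now apply (BLhom_ble_inj M N f).
      - intros _ [a [Ga <-]]. exists (tauM a). auto. }
    assert (HfGnt : nontrivial_set N fG).
    { exists (f x). split; [now exists x |]. intro E. apply x1, finj. now rewrite f1. }
    destruct (Hleast fG HfG HfGnt _ Fy) as [z [Gz Ez]]. now rewrite <- (finj _ _ Ez).
Qed.

Section Product.
Variables (A B : BL) (h : A -> B).
Hypothesis h1 : h bone = bone.

Definition one_times (G : B -> Prop) (p : prodBL A B) : Prop := fst p = bone /\ G (snd p).

Lemma one_times_tau_filter G : is_filter B G -> is_tau_filter _ (tau_h A B h) (one_times G).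
Proof.
  intros HG. pose proof (filter_one B G HG) as G1. destruct HG as [_ [Gprod Gup]].
  split; [split; [| split] |].
  - exists (bone : prodBL A B). split; auto.
  - intros [a b] [c d] [Ha Gb] [Hc Gd]. cbn in *. subst. split; [apply prod_one | cbn; auto].
  - intros [a b] [c d] [Ha Gb] [Hac Hbd]%prod_ble. cbn in *. subst a.
    split; [now apply le1_eq | eauto].
  - intros [a b] [Ha _]. cbn in *. subst a. split; cbn; [| rewrite h1]; auto.
Qed.

Lemma one_times_nontrivial G : nontrivial_set B G -> nontrivial_set _ (one_times G).
Proof.
  intros [q [Gq q1]]. exists ((bone, q) : prodBL A B). split; [split; auto |].
  intro E. apply q1. now apply pair_eq_iff in E.
Qed.

Lemma one_slice_filter (G : prodBL A B -> Prop) :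
  is_filter _ G -> is_filter B (fun b => G (bone, b)).
Proof.
  intros HG. pose proof (filter_one _ G HG) as G1. destruct HG as [_ [Gprod Gup]].
  split; [| split].
  - now exists bone.
  - intros y z Gy Gz. specialize (Gprod _ _ Gy Gz). cbn in Gprod.
    now rewrite prod_one in Gprod.
  - intros y z Gy Hyz. apply (Gup _ _ Gy), prod_ble. split; auto using ble_refl.
Qed.

(* A nontrivial tau_h-filter contains some [tau_h p = (a, h a)], and then either [p] or
   [(1, h a)] is a nontrivial element of its slice over [1]. *)
Lemma product_SI :
  (forall x y, h x = h y -> x = y) -> SI_BL B -> SI_SM (prodBL A B) (tau_h A B h).
Proof.
  intros hinj [FB [HFB [HFBnt Hleast]]].
  exists (one_times FB). split; [now apply one_times_tau_filter |].
  split; [now apply one_times_nontrivial |].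
  intros G [HG Gtau] [[a b] [Gab ab1]] [c d] [Hc Fd]. cbn in *. subst c.
  apply (Hleast _ (one_slice_filter G HG)); [| exact Fd].
  destruct HG as [_ [_ Gup]]. destruct (classic (a = bone)) as [-> | a1].
  - exists b. split; auto. intros ->. auto.
  - exists (h a). split.
    + apply (Gup _ _ (Gtau _ Gab)). apply prod_ble. cbn. auto using lex1, ble_refl.
    + intro E. apply a1, hinj. now rewrite E.
Qed.

Lemma product_SI_snd : bzero <> (bone : B) -> SI_SM (prodBL A B) (tau_h A B h) -> SI_BL B.
Proof.
  intros B01 [F [[HF _] [[[a b] [Fab ab1]] Hleast]]].
  assert (Ffst : forall p, F p -> fst p = bone).
  { intros p Fp. refine (proj1 (Hleast (one_times (fun _ => True)) _ _ p Fp)).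
    - apply one_times_tau_filter. split; [now exists bone | split; auto].
    - apply one_times_nontrivial. exists bzero. auto. }
  exists (fun y => F (bone, y)). split; [now apply one_slice_filter | split].
  - exists b. pose proof (Ffst _ Fab) as E. cbn in E. subst a. split; auto.
    intros ->. auto.
  - intros G HG HGnt y Fy.
    exact (proj2 (Hleast _ (one_times_tau_filter G HG) (one_times_nontrivial G HGnt) _ Fy)).
Qed.

End Product.

(** * The decomposition in the Boolean case *)

Lemma sig_ext {T : Type} {P : T -> Prop} (u v : {t | P t}) :
  proj1_sig u = proj1_sig v -> u = v.
Proof. apply eq_sig_hprop. intros. apply proof_irrelevance. Qed.

Section FixedPoints.
Context {M : BL} {tau : M -> M}.
Hypothesis Htau : is_state_morphism M tau.

Definition fixed_car := {x : M | tau x = x}.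

Definition fixed_op (op : M -> M -> M)
    (Hop : forall x y, tau (op x y) = op (tau x) (tau y)) (x y : fixed_car) : fixed_car :=
  exist _ (op (proj1_sig x) (proj1_sig y))
    (eq_trans (Hop _ _) (f_equal2 op (proj2_sig x) (proj2_sig y))).

Definition fixed_BL : BL.
Proof.
  refine (MkBL fixed_car
    (fixed_op bmeet (tau_meet Htau)) (fixed_op bjoin (tau_join Htau))
    (fixed_op bprod (tau_prod Htau)) (fixed_op bimp (tau_imp Htau))
    (exist _ bzero (tau_zero Htau)) (exist _ bone (tau_one Htau))
    _ _ _ _ _ _ _ _ _ _ _ _ _ _); intros.
  all: try (apply sig_ext; simpl; first [apply meet_comm | apply meet_assoc | apply join_comm
        | apply join_assoc | apply meet_absorb | apply join_absorb | apply meet_zero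
        | apply join_one | apply prod_comm | apply prod_assoc | apply prod_one
        | apply divisibility | apply prelinearity]).
  split; intro H; apply sig_ext; apply (f_equal (@proj1_sig _ _)) in H; simpl in *;
    now apply residuation.
Defined.

Definition to_fixed (x : M) : fixed_BL := exist _ (tau x) (tau_idem Htau x).

Lemma to_fixed_hom : is_BLhom M fixed_BL to_fixed.
Proof.
  repeat split; intros; apply sig_ext; simpl;
    first [apply Htau | apply (tau_zero Htau) | apply (tau_one Htau)].
Qed.

Lemma fixed_linearly_ordered : SI_SM M tau -> linearly_ordered fixed_BL.
Proof.
  intros HSI [x Hx] [y Hy]. unfold ble.
  destruct (SI_tau_chain Htau HSI x y) as [L | L]; rewrite Hx, Hy in L;
    [left | right]; now apply sig_ext.
Qed.

End FixedPoints.

Section Interval.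
Context {M : BL} {d : M}.
Hypothesis Hd : complemented d.

Local Notation below_d := (fun t => ble t d).

Definition interval_car := {x : M | ble x d}.

Definition interval_BL : BL.
Proof.
  refine (MkBL interval_car
    (fun x y => exist below_d (bmeet (proj1_sig x) (proj1_sig y))
                  (ble_trans _ _ _ _ (meet_le_l _ _ _) (proj2_sig x)))
    (fun x y => exist below_d (bjoin (proj1_sig x) (proj1_sig y))
                  (join_lub _ _ _ _ (proj2_sig x) (proj2_sig y)))
    (fun x y => exist below_d (bprod (proj1_sig x) (proj1_sig y))
                  (ble_trans _ _ _ _ (prod_le_l _ _ _) (proj2_sig x)))
    (fun x y => exist below_d (bmeet (bimp (proj1_sig x) (proj1_sig y)) d) (meet_le_r _ _ d))
    (exist below_d bzero (le0x _ d)) (exist below_d d (ble_refl _ d))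
    _ _ _ _ _ _ _ _ _ _ _ _ _ _); intros.
  all: try (apply sig_ext; simpl; first [apply meet_comm | apply meet_assoc | apply join_comm
        | apply join_assoc | apply meet_absorb | apply join_absorb | apply meet_zero
        | apply prod_comm | apply prod_assoc]).
  all: try apply sig_ext; simpl.
  - apply ble_joinE, (proj2_sig a).
  - rewrite <- (meet_complemented M _ d Hd). apply (proj2_sig a).
  - assert (E : ble (proj1_sig c) (bmeet (bimp (proj1_sig a) (proj1_sig b)) d) <->
                ble (bprod (proj1_sig a) (proj1_sig c)) (proj1_sig b)).
    { rewrite <- le_imp_iff. split; intro H.
      - eapply ble_trans; [exact H | apply meet_le_l].
      - apply le_meet; [exact H | apply (proj2_sig c)]. }
    split; intro H; [apply sig_ext |]; apply (f_equal (@proj1_sig _ _)) in H; simpl in *.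
    + now apply E.
    + apply sig_ext. now apply E.
  - rewrite (meet_complemented M _ d Hd), prod_assoc, <- divisibility,
      <- (meet_complemented M _ d Hd).
    symmetry. apply (ble_trans _ _ _ _ (meet_le_l _ _ _) (proj2_sig a)).
  - now rewrite <- meet_join_complemented, prelinearity, meet_comm, meet_one.
Defined.

Definition to_interval (x : M) : interval_BL := exist below_d (bmeet x d) (meet_le_r _ x d).

Lemma to_interval_hom : is_BLhom M interval_BL to_interval.
Proof.
  split; [| split; [| split; [| split; [| split]]]]; try intros x y; apply sig_ext; simpl.
  - apply ble_antisym.
    + apply le_meet; apply meet_mono; auto using meet_le_l, meet_le_r, ble_refl.
    + apply le_meet; [apply meet_mono; apply meet_le_l |].
      eapply ble_trans; apply meet_le_r.
  - now apply meet_join_complemented.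
  - rewrite !(meet_complemented M _ d Hd), <- (prod_assoc _ x d), (prod_assoc _ d y d),
      (prod_comm _ d y), <- (prod_assoc _ y d d), (complemented_idem M d Hd).
    symmetry. apply prod_assoc.
  - symmetry. now apply meet_imp_complemented.
  - rewrite meet_comm. apply meet_zero.
  - rewrite meet_comm. apply meet_one.
Qed.

End Interval.

Lemma pair_BLhom (M A B : BL) (f : M -> A) (g : M -> B) :
  is_BLhom M A f -> is_BLhom M B g ->
  is_BLhom M (prodBL A B) (fun x => (f x, g x) : prodBL A B).
Proof.
  intros [fm [fj [fp [fi [f0 f1]]]]] [gm [gj [gp [gi [g0 g1]]]]].
  repeat split; intros; cbn; congruence.
Qed.

Lemma BLhom_right_inverse (M N : BL) (f : M -> N) (g : N -> M) :
  is_BLhom M N f -> (forall x y, f x = f y -> x = y) -> (forall p, f (g p) = p) ->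
  is_BLhom N M g.
Proof.
  intros [fm [fj [fp [fi [f0 f1]]]]] finj fg.
  repeat split; intros; apply finj; rewrite ?fm, ?fj, ?fp, ?fi, ?f0, ?f1; now rewrite !fg.
Qed.

(* A complemented element [e] of Ker with [e <> 1] splits [(M, tau)] as
   [tau(M) x [0, e^-]] via [x |-> (tau x, x /\ e^-)]. *)
Section Decomposition.
Context {M : BL} {tau : M -> M}.
Hypothesis Htau : is_state_morphism M tau.
Hypothesis HSI : SI_SM M tau.
Context {e : M}.
Hypothesis He : complemented e.
Hypothesis Hte : tau e = bone.
Hypothesis He1 : e <> bone.

Let d := bneg e.
Let Hd : complemented d := complemented_neg M e He.
Let A := fixed_BL Htau.
Let B := interval_BL Hd.

Definition fixed_to_interval (a : A) : B := to_interval Hd (proj1_sig a).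

Definition decompose (x : M) : prodBL A B := (to_fixed Htau x, to_interval Hd x).

Definition recompose (p : prodBL A B) : M :=
  bjoin (bmeet (proj1_sig (fst p)) e) (proj1_sig (snd p)).

Lemma Ker_above_d x : Ker M tau x -> ble d x -> x = bone.
Proof.
  intros Kx Lx. assert (J : bjoin x e = bone).
  { apply (join_eq_one_le M d e); auto using ble_refl. now rewrite join_comm. }
  destruct (SI_join_eq_one Htau HSI x e J (or_introl Kx) (or_introl Hte)); tauto.
Qed.

Lemma d_le_imp x y : to_interval Hd x = to_interval Hd y -> ble d (bimp x y).
Proof.
  intro E. destruct (to_interval_hom Hd) as [_ [_ [_ [Himp _]]]].
  pose proof (Himp x y) as Ei. rewrite E, imp_refl in Ei.
  apply (f_equal (@proj1_sig _ _)) in Ei. cbn in Ei.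
  unfold ble. now rewrite meet_comm.
Qed.

Lemma fixed_to_interval_hom : is_BLhom A B fixed_to_interval.
Proof.
  destruct (to_interval_hom Hd) as [hm [hj [hp [hi [h0 h1]]]]].
  repeat split; intros; apply hm || apply hj || apply hp || apply hi || apply h0 || apply h1.
Qed.

(* [e \/ (u -> v) = 1] with [u -> v] tau-fixed, so the disjunction property applies. *)
Lemma fixed_to_interval_inj a b : fixed_to_interval a = fixed_to_interval b -> a = b.
Proof.
  assert (Hle : forall u v, tau u = u -> tau v = v ->
            to_interval Hd u = to_interval Hd v -> ble u v).
  { intros u v Hu Hv E. apply imp_eq_one.
    assert (J : bjoin e (bimp u v) = bone)
      by exact (join_eq_one_le M _ _ _ _ He (ble_refl M e) (d_le_imp u v E)).
    destruct (SI_disjunction_property Htau HSI e (bimp u v) Hte) as [? | ?]; auto.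
    - exists (bimp u v). now rewrite (tau_imp Htau), Hu, Hv.
    - contradiction. }
  destruct a as [x Hx], b as [y Hy]. unfold fixed_to_interval. cbn. intro E.
  apply sig_ext, ble_antisym; cbn; apply Hle; auto.
Qed.

Lemma decompose_hom : is_BLhom M (prodBL A B) decompose.
Proof. apply pair_BLhom; [apply to_fixed_hom | apply to_interval_hom]. Qed.

Lemma decompose_inj x y : decompose x = decompose y -> x = y.
Proof.
  intros [E1 E2]%pair_eq_iff. apply (f_equal (@proj1_sig _ _)) in E1. cbn in E1.
  assert (Hle : forall u v, tau u = tau v ->
            to_interval Hd u = to_interval Hd v -> ble u v).
  { intros u v T I. apply imp_eq_one, Ker_above_d.
    - now apply (Ker_imp_of_tau_eq Htau).
    - now apply d_le_imp. }
  apply ble_antisym; apply Hle; auto.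
Qed.

Lemma decompose_recompose p : decompose (recompose p) = p.
Proof.
  destruct p as [[a Ha] [b Hb]]. unfold decompose, recompose. cbn.
  assert (Td : tau d = bzero) by (unfold d; rewrite (tau_neg Htau), Hte; apply one_imp).
  assert (Tb : tau b = bzero).
  { apply le0_eq. rewrite <- Td. now apply (tau_mono Htau). }
  assert (ed : bmeet e d = bzero)
    by (rewrite (meet_complemented M e d Hd); apply prod_neg).
  f_equal; apply sig_ext; cbn.
  - now rewrite (tau_join Htau), (tau_meet Htau), Ha, Hte, meet_one, Tb, join_zero.
  - rewrite (meet_join_complemented M _ _ d Hd), <- meet_assoc, ed, meet_zero.
    now rewrite join_comm, join_zero.
Qed.

Lemma decompose_tau x : decompose (tau x) = tau_h A B fixed_to_interval (decompose x).
Proof.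
  unfold decompose, tau_h, fixed_to_interval. cbn. f_equal.
  apply sig_ext. apply (tau_idem Htau).
Qed.

Lemma product_decomposition_SI : SI_SM (prodBL A B) (tau_h A B fixed_to_interval).
Proof.
  apply (SI_SM_of_isomorphism _ M _ tau recompose); [| | | | exact HSI].
  - exact (BLhom_right_inverse M _ decompose recompose decompose_hom decompose_inj
             decompose_recompose).
  - intros p q E. now rewrite <- (decompose_recompose p), E, decompose_recompose.
  - intros x. exists (decompose x). apply decompose_inj. apply decompose_recompose.
  - intros p. apply decompose_inj.
    now rewrite decompose_tau, !decompose_recompose.
Qed.

Lemma interval_SI : SI_BL B.
Proof.
  apply (product_SI_snd A B fixed_to_interval); [apply fixed_to_interval_hom | |
    exact product_decomposition_SI].
  intro E. apply (f_equal (@proj1_sig _ _)) in E. cbn in E. apply He1.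
  destruct (complemented_boolean M e He) as [Hnn _].
  rewrite <- Hnn. change (bimp d bzero = bone). rewrite <- E. apply imp_refl.
Qed.

End Decomposition.

(** * The three cases *)

Section Cases.
Context {M : BL} {tau : M -> M}.
Hypothesis Htau : is_state_morphism M tau.

Lemma identity_tau_filter F : is_identity M tau -> is_filter M F -> is_tau_filter M tau F.
Proof. intros Hid HF. split; [exact HF |]. intros x Hx. now rewrite Hid. Qed.

Lemma SI_faithful :
  SI_SM M tau -> faithful M tau ->
  linearly_ordered M /\ is_identity M tau /\ SI_BL M.
Proof.
  intros HSI Hf. pose proof (faithful_identity Htau Hf) as Hid.
  split; [| split; [exact Hid |]].
  - intros x y. rewrite <- (Hid x), <- (Hid y). now apply (SI_tau_chain Htau).
  - destruct HSI as [F [[HF _] [Hnt Hleast]]].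
    exists F. split; [exact HF | split; [exact Hnt |]].
    intros G HG. apply Hleast. now apply identity_tau_filter.
Qed.

Lemma SI_identity : is_identity M tau -> SI_BL M -> SI_SM M tau.
Proof.
  intros Hid [F [HF [Hnt Hleast]]]. exists F.
  split; [now apply identity_tau_filter | split; [exact Hnt |]].
  intros G [HG _]. now apply Hleast.
Qed.

Lemma SI_complemented_Ker :
  SI_SM M tau -> has_nontrivial_boolean M ->
  exists e, complemented e /\ tau e = bone /\ e <> bone.
Proof.
  intros HSI [b [Hb [b0 b1]]]. pose proof (boolean_complemented M b Hb) as Cb.
  assert (T : bjoin (tau b) (tau (bneg b)) = bone)
    by now rewrite <- (tau_join Htau), Cb, (tau_one Htau).
  destruct (SI_tau_join_eq_one Htau HSI _ _ T) as [T1 | T1].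
  - now exists b.
  - exists (bneg b). split; [now apply complemented_neg | split; [exact T1 |]].
    intro E. apply b0, le0_eq, imp_eq_one, E.
Qed.

Lemma SI_boolean_decomposition :
  SI_SM M tau -> has_nontrivial_boolean M ->
  exists (A B : BL) (h : A -> B),
    linearly_ordered A /\ SI_BL B /\ is_BLhom A B h /\
    (forall x y, h x = h y -> x = y) /\
    exists f : M -> prodBL A B,
      is_BLhom M (prodBL A B) f /\
      (forall x y, f x = f y -> x = y) /\
      (forall p, exists x, f x = p) /\
      (forall x, f (tau x) = tau_h A B h (f x)).
Proof.
  intros HSI Hb. destruct (SI_complemented_Ker HSI Hb) as [e [He [Hte He1]]].
  exists (fixed_BL Htau), (interval_BL (complemented_neg M e He)),
    (fixed_to_interval Htau He).
  split; [now apply fixed_linearly_ordered |].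
  split; [exact (interval_SI Htau HSI He Hte He1) |].
  split; [apply fixed_to_interval_hom |].
  split; [now apply fixed_to_interval_inj |].
  exists (decompose Htau He).
  split; [apply decompose_hom |].
  split; [now apply decompose_inj |].
  split; [| apply decompose_tau].
  intros p. exists (recompose Htau He p). apply decompose_recompose; auto.
Qed.

Section NotFaithful.
Hypotheses (HSI : SI_SM M tau) (Hnf : ~ faithful M tau).

(* A nontrivial filter [G] meets Ker nontrivially: compare its [x <> 1] with a nontrivial
   [g] of the least tau-filter, which lies in Ker. *)
Lemma SI_linearly_ordered_least_filter :
  linearly_ordered M ->
  exists F, least_nontrivial_tau_filter M tau F /\ least_nontrivial_filter M F.
Proof.
  intros Hlin. destruct HSI as [F HF]. exists F. split; [exact HF |].
  pose proof (least_tau_filter_Ker Htau F Hnf HF) as FK.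
  destruct HF as [[HF _] [[g [Fg g1]] Hleast]].
  split; [exact HF | split; [now exists g |]].
  intros G HG [x [Gx x1]] z Fz.
  apply (Hleast _ (tau_filter_Ker_part Htau G HG)); [| exact Fz].
  destruct HG as [_ [_ Gup]]. destruct (Hlin x g) as [L | L].
  - exists g. repeat split; eauto.
  - exists x. repeat split; auto. now apply (Ker_le Htau g); auto.
Qed.

Section NoBoolean.
Hypothesis Hnb : no_nontrivial_boolean M.

Lemma SI_linearly_ordered_Rad1 : linearly_ordered M <-> Rad1_linearly_ordered M.
Proof.
  split; [intros Hl x y _ _; apply Hl |].
  intros HR. apply (linearly_ordered_of_chain Htau HSI Hnf Hnb).
  intros a b Ka Fb. apply HR; apply (Rad1_tau_nonnil Htau HSI Hnf Hnb); [| exact Fb].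
  now apply (Ker_tau_nonnil a Hnf).
Qed.

Lemma SI_Rad1_Ker_linearly_ordered :
  (forall x, Rad1 M x <-> Ker M tau x) -> linearly_ordered M.
Proof.
  intros HRK. apply (linearly_ordered_of_chain Htau HSI Hnf Hnb).
  intros a b Ka Fb. apply (SI_Ker_chain Htau HSI); [exact Ka |].
  apply (proj1 (HRK b)), (proj2 (Rad1_tau_nonnil Htau HSI Hnf Hnb b)), Fb.
Qed.

End NoBoolean.
End NotFaithful.
End Cases.

Theorem theorem2p7 (M : BL) (tau : M -> M) (Htau : is_state_morphism M tau) :
  (SI_SM M tau <->
     (* (i) *)
     (linearly_ordered M /\ is_identity M tau /\ SI_BL M)
     (* (ii) *)
  \/ (~ faithful M tau /\ no_nontrivial_boolean M /\ is_local M /\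
      Ker_SI M tau /\ disjunction_property M tau)
     (* (iii) *)
  \/ (~ faithful M tau /\ has_nontrivial_boolean M /\
      exists (A B : BL) (h : A -> B),
        linearly_ordered A /\ SI_BL B /\ is_BLhom A B h /\
        (forall x y, h x = h y -> x = y) /\
        exists f : M -> prodBL A B,
          is_BLhom M (prodBL A B) f /\
          (forall x y, f x = f y -> x = y) /\
          (forall p, exists x, f x = p) /\
          (forall x, f (tau x) = tau_h A B h (f x))))
  /\
  (* "Moreover" part of (ii) *)
  ((~ faithful M tau /\ no_nontrivial_boolean M /\ is_local M /\
    Ker_SI M tau /\ disjunction_property M tau) ->
     (linearly_ordered M <-> Rad1_linearly_ordered M) /\
     (linearly_ordered M ->
        SI_BL M /\
        exists F, least_nontrivial_tau_filter M tau F /\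
                  least_nontrivial_filter M F) /\
     ((forall x, Rad1 M x <-> Ker M tau x) -> linearly_ordered M)).
Proof.
  split; [split |].
  - intro HSI. destruct (classic (faithful M tau)) as [Hf | Hnf].
    { left. now apply (SI_faithful Htau). }
    right. destruct (classic (has_nontrivial_boolean M)) as [Hb | Hnb].
    { right. split; [exact Hnf | split; [exact Hb |]].
      now apply (SI_boolean_decomposition Htau). }
    apply no_nontrivial_boolean_of_not in Hnb.
    left. repeat split; auto.
    + now apply (SI_local Htau).
    + now apply (SI_Ker_SI Htau).
    + now apply (SI_disjunction_property Htau).
  - intros [[_ [Hid HB]] | [[_ [_ [_ [HK Hd]]]] | [_ [_ Hdec]]]].
    + now apply (SI_identity).
    + now apply (Ker_SI_disjunction_SI Htau).
    + destruct Hdec as [A [B [h [_ [HB [Hh [hinj [f [Hf [finj [fsurj fc]]]]]]]]]]].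
      apply (SI_SM_of_isomorphism M _ tau (tau_h A B h) f Hf finj fsurj fc).
      now apply product_SI; [apply Hh | |].
  - intros [Hnf [Hnb [_ [HK Hd]]]].
    assert (HSI : SI_SM M tau) by now apply (Ker_SI_disjunction_SI Htau).
    split; [| split].
    + exact (SI_linearly_ordered_Rad1 Htau HSI Hnf Hnb).
    + intro Hlin.
      destruct (SI_linearly_ordered_least_filter Htau HSI Hnf Hlin) as [F [HFt HF]].
      split; [now exists F | now exists F].
    + exact (SI_Rad1_Ker_linearly_ordered Htau HSI Hnf Hnb).
Qed.
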